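(* Let $G=A_5\simeq\mathrm{PSL}_2(\mathbb{F}_4)$ and $H\simeq A_4$. There is a flabby resolution $0\to J_{G/H}\to P\to F\to0$ with $\mathrm{rank}_{\mathbb{Z}}F=16$ such that there is an isomorphism of $A_5$-lattices $$\mathbb{Z}[A_5/C_5]\oplus\mathbb{Z}[A_5/S_3]\simeq\mathbb{Z}[A_5/D_5]\oplus F$$ (rank $22$). In particular $F$ is stably permutation.
   Context: A $G$-lattice is a finitely generated $\mathbb{Z}[G]$-module free over $\mathbb{Z}$. A permutation $G$-lattice is one isomorphic to $\bigoplus_i\mathbb{Z}[G/H_i]$. Stably permutation: $M\oplus P\simeq P'$ with $P,P'$ permutation. $F$ is flabby if $\widehat H^{-1}(H',F)=0$ for all subgroups $H'\le G$. A flabby resolution of $M$ is an exact sequence $0\to M\to P\to F\to0$ with $P$ permutation and $F$ flabby. The Chevalley module is $J_{G/H}=\mathrm{Hom}_{\mathbb{Z}}(I_{G/H},\mathbb{Z})$ where $I_{G/H}=\ker(\mathbb{Z}[G/H]\to\mathbb{Z})$. $D_5$ is dihedral of order $10$; the subgroups $C_5$, $S_3$, $D_5$ of $A_5$ are each unique up to conjugacy. *)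

From HB Require Import structures.
From mathcomp Require Import all_boot all_order all_algebra all_fingroup all_solvable.
Set Implicit Arguments. Unset Strict Implicit. Unset Printing Implicit Defensive.
Import GRing.Theory.
Local Open Scope ring_scope.

(* Conventions: a G-lattice of Z-rank n is given by matrices rep g : 'M[int]_n,
   acting on row vectors (v |-> v *m rep g), i.e. a right Z[G]-module Z^n. *)
Record lattice (gT : finGroupType) := Lattice {
  rk : nat;
  rep : gT -> 'M[int]_rk }.

Section Lattices.
Local Unset Implicit Arguments.
Context {gT : finGroupType}.
Implicit Types (G H : {group gT}) (L M : lattice gT).

Definition is_Glattice G L : Prop :=
  rep L 1%g = 1%:M /\
  (forall g h, g \in G -> h \in G -> rep L (g * h)%g = rep L g *m rep L h).

Definition equivariant G L M (f : 'M[int]_(rk L, rk M)) : Prop :=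
  forall g, g \in G -> rep L g *m f = f *m rep M g.

Definition lat_iso G L M : Prop :=
  exists (f : 'M[int]_(rk L, rk M)) (f' : 'M[int]_(rk M, rk L)),
    [/\ f *m f' = 1%:M, f' *m f = 1%:M & equivariant G L M f].

Definition dsum L M : lattice gT :=
  @Lattice gT (rk L + rk M) (fun g => block_mx (rep L g) 0 0 (rep M g)).

Definition zero_lattice : lattice gT := @Lattice gT 0 (fun _ => 1%:M).

(* the permutation lattice Z[G/H], basis = right cosets H x (x in G),
   g acts by H x |-> H x g *)
Definition coset_seq G H : seq {set gT} := enum (rcosets H G).
Definition pmat_nat G H (g : gT) (i j : nat) : int :=
  (((nth set0 (coset_seq G H) i :* g)%g) == nth set0 (coset_seq G H) j)%:Z.

Definition Zperm G H : lattice gT :=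
  @Lattice gT (size (coset_seq G H))
    (fun g => \matrix_(i, j) pmat_nat G H g i j).

(* I_{G/H} = ker(Z[G/H] -> Z), with Z-basis e_{k+1} - e_0 (k < [G:H]-1) *)
Definition Iaug G H : lattice gT :=
  @Lattice gT (size (coset_seq G H)).-1
    (fun g => \matrix_(k, l)
       (pmat_nat G H g k.+1 l.+1 - pmat_nat G H g 0 l.+1)).

(* dual lattice Hom_Z(L, Z): (phi.g)(x) = phi(x.g^-1) *)
Definition dual L : lattice gT :=
  @Lattice gT (rk L) (fun g => (rep L g^-1)^T).

Definition Jchev G H : lattice gT := dual (Iaug G H).

Definition is_permutation G L : Prop :=
  exists s : seq {group gT}, all (fun K : {group gT} => K \subset G) s /\
    lat_iso G L (foldr (fun K acc => dsum (Zperm G K) acc) zero_lattice s).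

Definition stably_permutation G L : Prop :=
  exists P P' : lattice gT,
    [/\ is_permutation G P, is_permutation G P' & lat_iso G (dsum L P) P'].

(* Hhat^{-1}(H', F) = ker(N_{H'}) / I_{H'} F vanishes for all H' <= G *)
Definition flabby G F : Prop :=
  forall H' : {group gT}, H' \subset G ->
  forall x : 'rV[int]_(rk F),
    x *m (\sum_(h in H') rep F h) = 0 ->
    exists c : gT -> 'rV[int]_(rk F),
      x = \sum_(h in H') (c h *m rep F h - c h).

Definition short_exact G M P F (i : 'M[int]_(rk M, rk P)) (p : 'M[int]_(rk P, rk F))
  : Prop :=
  [/\ equivariant G M P i, equivariant G P F p,
      (forall u : 'rV[int]_(rk M), u *m i = 0 -> u = 0),
      i *m p = 0 /\
      (forall v : 'rV[int]_(rk P), v *m p = 0 -> exists u, u *m i = v) &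
      (forall w : 'rV[int]_(rk F), exists v, v *m p = w)].

Definition flabby_resolution G M P F i p : Prop :=
  [/\ is_Glattice G P, is_Glattice G F, short_exact G M P F i p,
      is_permutation G P & flabby G F].

End Lattices.

From HB Require Import structures.
From mathcomp Require Import all_boot all_order all_algebra all_fingroup all_solvable.
Set Implicit Arguments. Unset Strict Implicit. Unset Printing Implicit Defensive.
Import GRing.Theory Num.Theory.

(* G acts on the five right cosets of H, a subgroup of index 5; since G is
   simple this identifies G with the sixty even permutations of {0,...,4}, so
   every lattice of the statement can be handled by evaluation.  The G-sets
   G/C5, G/S3, G/D5 and G/C3 are realised as orbits of words in the letters
   0,...,4 taken modulo permutations of positions: cyclic orders up to
   rotation, 2-subsets, cyclic orders up to dihedral symmetry, and ordered
   pairs.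
   A permutation lattice is flabby since an element killed by the norm of a
   subgroup has vanishing sums over the orbits of that subgroup.
   The Chevalley module J_{G/H} embeds into P = Z[G/C3] by sending the dual
   of e_k - e_0 to (sum of the pairs (k,b)) - (sum of the pairs (a,k)), and
   the pairs other than the (k,0) span a Z-complement F of its image.  An
   explicit integer matrix, checked to be invertible and equivariant, gives
   Z[G/C5] + Z[G/S3] = Z[G/D5] + F; thus F is a direct summand of a permutation
   lattice, hence flabby, and it is stably permutation. *)

Section LatticeIsomorphisms.
Local Open Scope ring_scope.
Variables (gT : finGroupType) (G : {group gT}).
Implicit Types L M N : lattice gT.

Lemma equivariant_inv L M (f : 'M[int]_(rk L, rk M)) f' :
  f *m f' = 1%:M -> f' *m f = 1%:M -> equivariant G L M f -> equivariant G M L f'.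
Proof.
move=> ff' f'f eqf g Gg.
have -> : f' *m rep L g = f' *m (rep L g *m f) *m f'.
  by rewrite mulmxA -mulmxA ff' mulmx1.
by rewrite eqf // mulmxA f'f mul1mx.
Qed.

Lemma lat_iso_refl L : lat_iso G L L.
Proof. by exists 1%:M, 1%:M; split; rewrite ?mulmx1 // => g _; rewrite mulmx1 mul1mx. Qed.

Lemma lat_iso_sym L M : lat_iso G L M -> lat_iso G M L.
Proof. by case=> f [f' [ff' f'f eqf]]; exists f', f; split; last exact: equivariant_inv eqf. Qed.

Lemma lat_iso_trans L M N : lat_iso G L M -> lat_iso G M N -> lat_iso G L N.
Proof.
case=> f1 [f1' [e1 e1' q1]] [f2 [f2' [e2 e2' q2]]].
exists (f1 *m f2), (f2' *m f1'); split.
- by rewrite -mulmxA (mulmxA f2) e2 mul1mx.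
- by rewrite -mulmxA (mulmxA f1') e1' mul1mx.
- by move=> g Gg; rewrite mulmxA q1 // -mulmxA q2 // mulmxA.
Qed.

Lemma lat_iso_dsum L L' M M' :
  lat_iso G L L' -> lat_iso G M M' -> lat_iso G (dsum L M) (dsum L' M').
Proof.
case=> f1 [f1' [e1 e1' q1]] [f2 [f2' [e2 e2' q2]]].
exists (block_mx f1 0 0 f2), (block_mx f1' 0 0 f2'); split.
- by rewrite mulmx_block !mulmx0 !mul0mx !addr0 !add0r e1 e2 -scalar_mx_block.
- by rewrite mulmx_block !mulmx0 !mul0mx !addr0 !add0r e1' e2' -scalar_mx_block.
- move=> g Gg /=; rewrite !mulmx_block !mulmx0 !mul0mx !addr0 !add0r.
  by rewrite q1 // q2.
Qed.

Lemma lat_iso_dsumC L M : lat_iso G (dsum L M) (dsum M L).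
Proof.
exists (block_mx 0 1%:M 1%:M 0), (block_mx 0 1%:M 1%:M 0); split.
- by rewrite mulmx_block !mulmx0 !mul0mx !addr0 !add0r !mulmx1 -scalar_mx_block.
- by rewrite mulmx_block !mulmx0 !mul0mx !addr0 !add0r !mulmx1 -scalar_mx_block.
- move=> g Gg /=; rewrite !mulmx_block !mulmx0 !mul0mx !addr0 !add0r.
  by rewrite !mulmx1 !mul1mx.
Qed.

Lemma lat_iso_dsum0 L : lat_iso G L (dsum L zero_lattice).
Proof.
exists (row_mx 1%:M 0), (col_mx 1%:M 0); split.
- by rewrite mul_row_col mulmx0 addr0 mulmx1.
- rewrite mul_col_row mulmx1 mulmx0 mul0mx scalar_mx_block; congr block_mx.
  by apply/matrixP=> [[]].
- move=> g Gg /=; rewrite mul_mx_row mul_row_block !mulmx0 !mul0mx !addr0.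
  by rewrite mulmx1 mul1mx.
Qed.

End LatticeIsomorphisms.

Section PermutationLatticeSums.
Variables (gT : finGroupType) (G : {group gT}).

Lemma is_permutation_iso (K : {group gT}) L :
  K \subset G -> lat_iso G (Zperm G K) L -> is_permutation G L.
Proof.
move=> sKG isoKL; exists [:: K]; split; first by rewrite /= sKG.
exact: lat_iso_trans (lat_iso_sym isoKL) (lat_iso_dsum0 _ _).
Qed.

Lemma stably_permutation_cancel (K1 K2 K3 : {group gT}) F :
  K1 \subset G -> K2 \subset G -> K3 \subset G ->
  lat_iso G (dsum (Zperm G K1) (Zperm G K2)) (dsum (Zperm G K3) F) ->
  stably_permutation G F.
Proof.
move=> sK1G sK2G sK3G isoF; exists (Zperm G K3), (dsum (Zperm G K1) (Zperm G K2)).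
split.
- exact: is_permutation_iso sK3G (lat_iso_refl _ _).
- exists [:: K1; K2]; split; first by rewrite /= sK1G sK2G.
  exact: lat_iso_dsum (lat_iso_refl _ _) (lat_iso_dsum0 _ _).
- exact: lat_iso_trans (lat_iso_dsumC _ _ _) (lat_iso_sym isoF).
Qed.

End PermutationLatticeSums.

Section Flabby.
Local Open Scope ring_scope.
Variables (gT : finGroupType) (G : {group gT}).
Implicit Types L M : lattice gT.

Lemma flabby_retract L M (f : 'M[int]_(rk M, rk L)) (r : 'M[int]_(rk L, rk M)) :
  equivariant G M L f -> equivariant G L M r -> f *m r = 1%:M ->
  flabby G L -> flabby G M.
Proof.
move=> eqf eqr fr flabL H' sH'G y yN.
have [c yfE] : exists c : gT -> 'rV[int]_(rk L),
    y *m f = \sum_(h in H') (c h *m rep L h - c h).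
  apply: flabL => //; rewrite -mulmxA mulmx_sumr.
  rewrite (eq_bigr (fun h => rep M h *m f)) => [|h H'h]; last first.
    by rewrite eqf ?(subsetP sH'G).
  by rewrite -mulmx_suml mulmxA yN mul0mx.
exists (fun h => c h *m r).
rewrite -[y]mulmx1 -fr mulmxA yfE mulmx_suml; apply: eq_bigr => h H'h.
by rewrite mulmxBl -mulmxA -eqr ?mulmxA // (subsetP sH'G).
Qed.

Lemma flabby_iso L M : lat_iso G L M -> flabby G L -> flabby G M.
Proof.
case=> f [f' [ff' f'f eqf]].
exact: flabby_retract (equivariant_inv ff' f'f eqf) eqf f'f.
Qed.

Lemma dsum_submx L M g (y : 'rV[int]_(rk L + rk M)) :
  lsubmx (y *m rep (dsum L M) g) = lsubmx y *m rep L g /\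
  rsubmx (y *m rep (dsum L M) g) = rsubmx y *m rep M g.
Proof.
rewrite -[y]hsubmxK mul_row_block !mulmx0 addr0 add0r.
by rewrite !row_mxKl !row_mxKr.
Qed.

Lemma flabby_dsum L M : flabby G L -> flabby G M -> flabby G (dsum L M).
Proof.
move=> flabL flabM H' sH'G y yN.
have yNl : lsubmx y *m \sum_(h in H') rep L h = 0.
  transitivity (lsubmx (y *m \sum_(h in H') rep (dsum L M) h)); last first.
    by rewrite yN raddf0.
  rewrite !mulmx_sumr raddf_sum; apply: eq_bigr => h _.
  by rewrite -(dsum_submx h y).1.
have yNr : rsubmx y *m \sum_(h in H') rep M h = 0.
  transitivity (rsubmx (y *m \sum_(h in H') rep (dsum L M) h)); last first.
    by rewrite yN raddf0.
  rewrite !mulmx_sumr raddf_sum; apply: eq_bigr => h _.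
  by rewrite -(dsum_submx h y).2.
have [cl clE] := flabL H' sH'G _ yNl.
have [cr crE] := flabM H' sH'G _ yNr.
exists (fun h => row_mx (cl h) (cr h)).
rewrite -[y]hsubmxK clE crE; apply/eqP.
rewrite -[X in _ == X]hsubmxK !raddf_sum /=; apply/eqP; congr row_mx.
  apply: eq_bigr => h _.
  by rewrite raddfB /= (dsum_submx h (row_mx _ _)).1 !row_mxKl.
apply: eq_bigr => h _.
by rewrite raddfB /= (dsum_submx h (row_mx _ _)).2 !row_mxKr.
Qed.

Lemma flabby_dsumr L M : flabby G (dsum L M) -> flabby G M.
Proof.
apply: (@flabby_retract (dsum L M) M (row_mx 0 1%:M) (col_mx 0 1%:M)).
- move=> g Gg /=; rewrite mul_row_block !mulmx0 !mul0mx !add0r.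
  by rewrite mul_mx_row mulmx0 mulmx1 mul1mx.
- move=> g Gg /=; rewrite mul_block_col !mulmx0 !mul0mx !add0r.
  by rewrite mul_col_mx mul0mx mulmx1 mul1mx.
- by rewrite mul_row_col mulmx0 add0r mulmx1.
Qed.

End Flabby.

Section Indicators.
Local Open Scope ring_scope.

Lemma sum_indicator (I : finType) (j : I) (F : I -> int) :
  \sum_i (j == i)%:Z * F i = F j.
Proof.
rewrite (bigD1 j) //= eqxx mul1r big1 ?addr0 // => i.
by rewrite eq_sym => /negbTE ->; rewrite mul0r.
Qed.

Lemma sum_indicator_mem (I : finType) (j : I) (A : {set I}) :
  \sum_(i in A) (j == i)%:Z = (j \in A)%:Z.
Proof.
rewrite big_mkcond /= -(sum_indicator j (fun i => (i \in A)%:Z)).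
by apply: eq_bigr => i _; case: (i \in A); rewrite ?mulr1 ?mulr0.
Qed.

End Indicators.

Section PermutationLattice.
Local Open Scope ring_scope.
Variables (gT : finGroupType) (G : {group gT}) (n : nat) (to : action G 'I_n).

Definition permlat : lattice gT :=
  @Lattice gT n (fun g => \matrix_(i, j) (to i g == j)%:Z).

Lemma permlat_Glattice : is_Glattice G permlat.
Proof.
split; first by apply/matrixP=> i j; rewrite !mxE act1 natz.
move=> g h Gg Gh; apply/matrixP=> i j; rewrite !mxE.
under eq_bigr do rewrite !mxE.
by rewrite sum_indicator actMin.
Qed.

Lemma delta_mx_permlat (k : 'I_n) g :
  delta_mx (0 : 'I_1) k *m rep permlat g = delta_mx 0 (to k g).
Proof. by rewrite -rowE; apply/matrixP=> i j; rewrite !mxE ord1 eqxx natz eq_sym. Qed.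

Section OrbitRepresentatives.
Variables (K : {group gT}) (sKG : K \subset G).

Definition orbit_repr (i : 'I_n) := odflt i [pick j in orbit to K i].

Lemma orbit_repr_in i : orbit_repr i \in orbit to K i.
Proof. by rewrite /orbit_repr; case: pickP => [//|/(_ i)]; rewrite orbit_refl. Qed.

Lemma orbit_repr_orbit i j : orbit to K i = orbit to K j -> orbit_repr i = orbit_repr j.
Proof. by move=> Kij; rewrite /orbit_repr Kij; case: pickP => // /(_ j); rewrite orbit_refl. Qed.

Lemma orbit_repr_eq i j :
  (orbit_repr i == j) = (i \in orbit to K j) && (orbit_repr j == j).
Proof.
apply/eqP/andP=> [<- | [/(orbit_in_eqP sKG)/orbit_repr_orbit -> /eqP //]].
have /(orbit_in_eqP sKG) Kri := orbit_repr_in i.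
by rewrite Kri orbit_refl (orbit_repr_orbit Kri).
Qed.

Lemma orbit_sum_eq0 (x : 'rV[int]_n) j :
  x *m \sum_(h in K) rep permlat h = 0 -> \sum_(i in orbit to K j) x 0 i = 0.
Proof.
move=> xN.
have sumK0 : \sum_(k in orbit to K j) \sum_(h in K) \sum_i x 0 i * (to i h == k)%:Z = 0.
  apply: big1 => k _.
  transitivity ((x *m \sum_(h in K) rep permlat h) 0 k); last by rewrite xN mxE.
  rewrite mulmx_sumr summxE; apply: eq_bigr => h _.
  by rewrite mxE; apply: eq_bigr => i _; rewrite mxE.
move: sumK0; rewrite exchange_big (eq_bigr (fun h => \sum_(i in orbit to K j) x 0 i)).
  rewrite sumr_const => /eqP; rewrite mulrn_eq0 cards_eq0 -[_ == set0]negbK -card_gt0.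
  by rewrite cardG_gt0 => /eqP.
move=> h Kh; rewrite exchange_big /= [RHS]big_mkcond; apply: eq_bigr => i _.
rewrite -mulr_sumr sum_indicator_mem orbit_actr_in //.
by case: (i \in _); rewrite ?mulr1 ?mulr0.
Qed.

End OrbitRepresentatives.

Lemma permlat_flabby : flabby G permlat.
Proof.
move=> K sKG x xN.
pose r := orbit_repr K.
have [hs hsP] : {hs : 'I_n -> gT | forall i, hs i \in K /\ to (r i) (hs i) = i}.
  suff hex i : exists h, (h \in K) && (to (r i) h == i).
    by exists (fun i => xchoose (hex i)) => i; have /andP[-> /eqP] := xchooseP (hex i).
  have : i \in orbit to K (r i) by rewrite orbit_in_sym ?orbit_repr_in.
  by case/orbitP=> h Kh hi; exists h; rewrite Kh hi eqxx.
(* With e_i = e_(r i) * hs i, x is the sum of x_i (e_(r i) * hs i - e_(r i)) and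
   of sum_i x_i e_(r i), whose coefficients are orbit sums of x, hence zero. *)
exists (fun h => \sum_(i | hs i == h) x 0 i *: delta_mx (0 : 'I_1) (r i)).
have -> : \sum_(h in K) ((\sum_(i | hs i == h) x 0 i *: delta_mx (0 : 'I_1) (r i)) *m rep permlat h
                          - \sum_(i | hs i == h) x 0 i *: delta_mx (0 : 'I_1) (r i))
    = \sum_i x 0 i *: (delta_mx (0 : 'I_1) i - delta_mx (0 : 'I_1) (r i)).
  rewrite [RHS](partition_big hs (mem K)) => [|i _]; last by case: (hsP i).
  apply: eq_bigr => h Kh; rewrite mulmx_suml -sumrB.
  apply: eq_big => [i // | i /eqP hsi].
  by rewrite -scalemxAl delta_mx_permlat -hsi (hsP i).2 scalerBr.
rewrite (eq_bigr (fun i => x 0 i *: delta_mx 0 i - x 0 i *: delta_mx 0 (r i))); last first.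
  by move=> i _; rewrite scalerBr.
rewrite sumrB -row_sum_delta.
suff -> : \sum_i x 0 i *: delta_mx (0 : 'I_1) (r i) = 0 by rewrite subr0.
apply/rowP=> j; rewrite summxE mxE.
under eq_bigr do rewrite !mxE /= eq_sym (orbit_repr_eq sKG).
case: (boolP (orbit_repr K j == j)) => rj.
  transitivity (\sum_(i in orbit to K j) x 0 i); last exact: (@orbit_sum_eq0 K sKG x j xN).
  rewrite [RHS]big_mkcond; apply: eq_bigr => i _.
  by rewrite andbT; case: (i \in _); rewrite ?mulr1 ?mulr0.
by apply: big1 => i _; rewrite andbF mulr0.
Qed.

Lemma astab1_card_eq (i0 : 'I_n) (K : {group gT}) :
  orbit to G i0 = setT -> K \subset 'C_G[i0 | to]%g -> (#|K| * n)%N = #|G| ->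
  'C_G[i0 | to]%g = K.
Proof.
move=> orbT sKC cardK; apply/esym/eqP; rewrite eqEcard sKC /=.
have n_gt0 : (0 < n)%N by apply: leq_ltn_trans (ltn_ord i0).
have := card_orbit_in_stab to i0 (subxx G); rewrite orbT cardsT card_ord -cardK.
by rewrite mulnC => /eqP; rewrite eqn_pmul2r // => /eqP ->.
Qed.

Lemma Zperm_iso_permlat (i0 : 'I_n) (K : {group gT}) :
  orbit to G i0 = setT -> 'C_G[i0 | to]%g = K -> lat_iso G (Zperm G K) permlat.
Proof.
move=> orbT stabK; pose cs := coset_seq G K.
have cs_uniq : uniq cs := enum_uniq _.
have cs_eq (i k : 'I_(size cs)) : (nth set0 cs i == nth set0 cs k) = (i == k).
  exact: nth_uniq.
have cs_rcosets (i : 'I_(size cs)) : nth set0 cs i \in rcosets K G.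
  by rewrite -mem_enum mem_nth.
have cs_nth C : C \in rcosets K G -> exists k : 'I_(size cs), nth set0 cs k = C.
  rewrite -mem_enum -/cs -index_mem => Ccs.
  by exists (Ordinal Ccs); rewrite nth_index // -index_mem.
pose psi (C : {set gT}) := to i0 (repr C).
have psiKx x : x \in G -> psi (K :* x)%g = to i0 x.
  by move=> Gx; rewrite /psi -stabK -(amove_act to i0 (subxx G) Gx) amoveK ?mem_orbit.
have psi_inj : {in rcosets K G &, injective psi}.
  move=> C C'; rewrite -stabK => CK C'K eqCC'.
  by rewrite -(act_reprK (subxx G) CK) -(act_reprK (subxx G) C'K) /= -/(psi C) -/(psi C') eqCC'.
have psi_eq (i k : 'I_(size cs)) : (psi (nth set0 cs i) == psi (nth set0 cs k)) = (i == k).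
  by rewrite (inj_in_eq psi_inj) ?cs_rcosets ?cs_eq.
pose f := \matrix_(i < size cs, j < n) (psi (nth set0 cs i) == j)%:Z.
exists f, f^T; split.
- apply/matrixP=> i k; rewrite !mxE; under eq_bigr do rewrite !mxE.
  by rewrite sum_indicator eq_sym psi_eq natz.
- apply/matrixP=> j j'; rewrite !mxE; under eq_bigr do rewrite !mxE.
  have : j \in orbit to G i0 by rewrite orbT inE.
  rewrite (orbit_stabilizer to i0 (subxx G)) stabK => /imsetP[C /cs_nth[k <-] ->] /=.
  under eq_bigr do rewrite -/(psi _) eq_sym psi_eq.
  by rewrite sum_indicator natz.
- move=> g Gg; apply/matrixP=> i j; rewrite !mxE.
  under eq_bigr do rewrite !mxE; under [RHS]eq_bigr do rewrite !mxE.
  have [/cs_nth[k csk] psiM] : (nth set0 cs i :* g)%g \in rcosets K G /\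
      psi (nth set0 cs i :* g)%g = to (psi (nth set0 cs i)) g.
    have /rcosetsP[x Gx ->] := cs_rcosets i.
    rewrite -rcosetM psiKx ?groupM // psiKx // actMin //; split=> //.
    by apply/rcosetsP; exists (x * g)%g; rewrite ?groupM.
  rewrite sum_indicator /pmat_nat -/cs -csk.
  under eq_bigr do rewrite cs_eq.
  by rewrite sum_indicator csk psiM.
Qed.

End PermutationLattice.

Section SplitCokernel.
Local Open Scope ring_scope.
Variables (gT : finGroupType) (G : {group gT}) (M P : lattice gT) (m : nat).
Variables (i : 'M[int]_(rk M, rk P)) (r : 'M[int]_(rk P, rk M)).
Variables (p : 'M[int]_(rk P, m)) (s : 'M[int]_(m, rk P)).
Hypotheses (P_Glat : is_Glattice G P) (i_equiv : equivariant G M P i).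
Hypotheses (ir : i *m r = 1%:M) (ip : i *m p = 0) (sp : s *m p = 1%:M).
Hypothesis (ri_ps : r *m i + p *m s = 1%:M).

Definition coker_lattice : lattice gT := @Lattice gT m (fun g => s *m rep P g *m p).

Let proj_sec : p *m s = 1%:M - r *m i.
Proof. by rewrite -ri_ps addrC addKr. Qed.

Let ret_inj_rep_proj g : g \in G -> r *m i *m rep P g *m p = 0.
Proof. by move=> Gg; rewrite -!mulmxA (mulmxA i) -i_equiv // -!mulmxA ip !mulmx0. Qed.

Lemma coker_proj_equivariant : equivariant G P coker_lattice p.
Proof.
move=> g Gg /=; rewrite !mulmxA proj_sec mulmxBl mul1mx mulmxBl.
by rewrite ret_inj_rep_proj // subr0.
Qed.

Lemma coker_Glattice : is_Glattice G coker_lattice.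
Proof.
have [rep1 repM] := P_Glat; split=> /=; first by rewrite rep1 mulmx1 sp.
move=> g h Gg Gh; rewrite repM //.
by rewrite -mulmxA -(mulmxA (rep P g)) (coker_proj_equivariant Gh) !mulmxA.
Qed.

Lemma coker_short_exact : short_exact G M P coker_lattice i p.
Proof.
split=> //.
- exact: coker_proj_equivariant.
- by move=> u ui0; rewrite -[u]mulmx1 -ir mulmxA ui0 mul0mx.
- split=> // v vp0; exists (v *m r).
  by rewrite -[RHS]mulmx1 -ri_ps mulmxDr !mulmxA vp0 mul0mx addr0.
- by move=> w; exists (w *m s); rewrite -mulmxA sp mulmx1.
Qed.

End SplitCokernel.

Arguments coker_lattice {gT} P {m} p s.

Lemma conj_cycle_exp (gT : finGroupType) (K : {group gT}) (c u : gT) :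
  c \in K -> #|K| = (#[c]%g * 2)%N -> u \in K -> exists2 k, k < #[c]%g & (c ^ u = c ^+ k)%g.
Proof.
move=> Kc cardK Ku; have sCK : <[c]>%g \subset K by rewrite cycle_subG.
have nCK : (<[c]> <| K)%g.
  apply: index2_normal => //; apply/eqP.
  by rewrite -(eqn_pmul2l (order_gt0 c)) -[#[c]%g]/#|<[c]>%g| Lagrange // cardK.
have /cyclePmin[k kc ->] : (c ^ u \in <[c]>)%g.
  by rewrite memJ_norm ?cycle_id // (subsetP (normal_norm nCK)).
by exists k.
Qed.

Section ListPermutations.

Definition id5 : seq nat := iota 0 5.
Definition ap (L : seq nat) (k : nat) : nat := nth 0 L k.
(* [lcomp L1 L2] is L1 followed by L2, as for the right action on cosets. *)
Definition lcomp (L1 L2 : seq nat) : seq nat := [seq ap L2 (ap L1 k) | k <- id5].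
Definition linv (L : seq nat) : seq nat := [seq index k L | k <- id5].
Fixpoint lpow (L : seq nat) (e : nat) : seq nat :=
  if e is e'.+1 then lcomp (lpow L e') L else id5.
Definition lconj (L Lu : seq nat) : seq nat := lcomp (lcomp (linv Lu) L) Lu.

Definition lodd (L : seq nat) : bool :=
  odd (sumn [seq count (fun j => (i < j) && (ap L j < ap L i)) id5 | i <- id5]).

Definition S5list : seq (seq nat) := permutations id5.
Definition A5list : seq (seq nat) := [seq L <- S5list | ~~ lodd L].

Lemma lodd_lcomp :
  {in S5list &, forall L1 L2, lodd (lcomp L1 L2) = lodd L1 (+) lodd L2}.
Proof.
have chk : all (fun L1 => all (fun L2 =>
    lodd (lcomp L1 L2) == lodd L1 (+) lodd L2) S5list) S5list by vm_compute.
by move=> L1 L2 /(allP chk)/allP h /h/eqP.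
Qed.

Lemma lodd_id5 : lodd id5 = false. Proof. by []. Qed.

Lemma size_A5list : size A5list = 60. Proof. by vm_compute. Qed.

Lemma linv_unique : {in A5list &, forall L M, lcomp L M = id5 -> M = linv L}.
Proof.
have chk : all (fun L => all (fun M =>
    (lcomp L M == id5) ==> (M == linv L)) A5list) A5list by vm_compute.
by move=> L M /(allP chk)/allP h /h/implyP h' /eqP/h'/eqP.
Qed.

End ListPermutations.

Section Words.

Fixpoint lexlt (s t : seq nat) : bool :=
  match s, t with
  | x :: s', y :: t' => (x < y) || ((x == y) && lexlt s' t')
  | _, _ => false
  end.

(* A word is a list of the letters 0,...,4; a permutation list L acts on it by
   relabelling the letters, and [canon_word R x] is the lexicographically least
   reindexing of x by the position permutations in R, a normal form modulo R. *)
Definition canon_word (R : seq (seq nat)) (x : seq nat) : seq nat :=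
  foldr (fun r best => let y := [seq ap x i | i <- r] in if lexlt y best then y else best) x R.

Definition act_mod (R : seq (seq nat)) (x L : seq nat) : seq nat := canon_word R (map (ap L) x).

Definition is_A5set (xs : seq (seq nat)) (act : seq nat -> seq nat -> seq nat) : bool :=
  [&& uniq xs, all (fun x => all (fun L => act x L \in xs) A5list) xs,
      all (fun x => act x id5 == x) xs,
      all (fun x => all (fun L1 => all (fun L2 =>
        act (act x L1) L2 == act x (lcomp L1 L2)) A5list) A5list) xs &
      all (fun x => all (fun y => has (fun L => act x L == y) A5list) xs) xs].

End Words.

Section MatrixChecks.
Local Open Scope ring_scope.
Implicit Types f g h : nat -> nat -> int.

Definition sumz (s : seq int) : int := foldr +%R 0 s.
Definition prodf p f g (i j : nat) : int := sumz [seq f i k * g k j | k <- iota 0 p].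
Definition idf (i j : nat) : int := (i == j)%:Z.
Definition zerof (i j : nat) : int := 0.
Definition plusf f g (i j : nat) : int := f i j + g i j.
Definition blockf n1 m1 f g (i j : nat) : int :=
  if (i < n1)%N then (if (j < m1)%N then f i j else 0)
  else (if (j < m1)%N then 0 else g (i - n1)%N (j - m1)%N).

Definition eqcheck n m f g : bool :=
  all (fun i => all (fun j => f i j == g i j) (iota 0 m)) (iota 0 n).
Definition mulcheck n p m f g h : bool := eqcheck n m (prodf p f g) h.

Lemma sumz_big p (F : nat -> int) : \sum_(k < p) F k = sumz [seq F k | k <- iota 0 p].
Proof.
rewrite -(big_mkord xpredT F) /index_iota subn0.
by elim: (iota 0 p) => [|k s IHs]; rewrite ?big_nil ?big_cons //= IHs.
Qed.

Lemma mulmx_fun n p m f g :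
  \matrix_(i < n, j < p) f i j *m \matrix_(i < p, j < m) g i j
  = \matrix_(i < n, j < m) prodf p f g i j.
Proof.
apply/matrixP=> i j; rewrite !mxE.
rewrite (eq_bigr (fun k : 'I_p => f i k * g k j)) => [|k _]; last by rewrite !mxE.
by rewrite (sumz_big p (fun k => f i k * g k j)).
Qed.

Lemma eqcheckP n m f g : eqcheck n m f g ->
  \matrix_(i < n, j < m) f i j = \matrix_(i < n, j < m) g i j.
Proof.
move=> /allP chk; apply/matrixP=> i j; rewrite !mxE.
have i_in : (i : nat) \in iota 0 n by rewrite mem_iota ltn_ord.
have j_in : (j : nat) \in iota 0 m by rewrite mem_iota ltn_ord.
by have /allP/(_ _ j_in)/eqP := chk _ i_in.
Qed.

Lemma mulcheckP n p m f g h : mulcheck n p m f g h ->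
  \matrix_(i < n, j < p) f i j *m \matrix_(i < p, j < m) g i j = \matrix_(i < n, j < m) h i j.
Proof. by rewrite mulmx_fun; apply: eqcheckP. Qed.

Lemma addmx_fun n m f g :
  \matrix_(i < n, j < m) f i j + \matrix_(i < n, j < m) g i j
  = \matrix_(i < n, j < m) plusf f g i j.
Proof. by apply/matrixP=> i j; rewrite !mxE. Qed.

Lemma idf_mx n : \matrix_(i < n, j < n) idf i j = 1%:M.
Proof. by apply/matrixP=> i j; rewrite !mxE /idf natz. Qed.

Lemma zerof_mx n m : \matrix_(i < n, j < m) zerof i j = 0.
Proof. by apply/matrixP=> i j; rewrite !mxE. Qed.

Lemma blockf_mx n1 n2 m1 m2 f g :
  block_mx (\matrix_(i < n1, j < m1) f i j) 0 0 (\matrix_(i < n2, j < m2) g i j)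
  = \matrix_(i < n1 + n2, j < m1 + m2) blockf n1 m1 f g i j.
Proof.
apply/matrixP=> i j; rewrite -(splitK i) -(splitK j).
case: (split i) => i'; case: (split j) => j'; rewrite /unsplit.
- by rewrite block_mxEul !mxE /blockf /= !ltn_ord.
- by rewrite block_mxEur !mxE /blockf /= ltn_ord ltnNge leq_addr.
- by rewrite block_mxEdl !mxE /blockf /= ltn_ord ltnNge leq_addr.
- by rewrite block_mxEdr !mxE /blockf /= !ltnNge !leq_addr /= !addKn.
Qed.

End MatrixChecks.

Section A5Words.

(* One A5-orbit of cyclic orders modulo rotation (point stabiliser C5), cyclic
   orders modulo the dihedral group (D5), words modulo S2 x S3 on positions,
   i.e. 2-subsets (S3), and words modulo S3 on the last three positions, i.e.
   ordered pairs (C3). *)Definition XCl : seq (seq nat) :=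
  [:: [:: 0; 1; 2; 3; 4];
  [:: 0; 1; 3; 4; 2];
  [:: 0; 1; 4; 2; 3];
  [:: 0; 2; 1; 4; 3];
  [:: 0; 2; 3; 1; 4];
  [:: 0; 2; 4; 3; 1];
  [:: 0; 3; 1; 2; 4];
  [:: 0; 3; 2; 4; 1];
  [:: 0; 3; 4; 1; 2];
  [:: 0; 4; 1; 3; 2];
  [:: 0; 4; 2; 1; 3];
  [:: 0; 4; 3; 2; 1]].

Definition XDl : seq (seq nat) :=
  [:: [:: 0; 1; 2; 3; 4];
  [:: 0; 1; 2; 4; 3];
  [:: 0; 1; 3; 2; 4];
  [:: 0; 1; 3; 4; 2];
  [:: 0; 1; 4; 2; 3];
  [:: 0; 1; 4; 3; 2]].

Definition XSl : seq (seq nat) :=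
  [:: [:: 0; 1; 2; 3; 4];
  [:: 0; 2; 1; 3; 4];
  [:: 0; 3; 1; 2; 4];
  [:: 0; 4; 1; 2; 3];
  [:: 1; 2; 0; 3; 4];
  [:: 1; 3; 0; 2; 4];
  [:: 1; 4; 0; 2; 3];
  [:: 2; 3; 0; 1; 4];
  [:: 2; 4; 0; 1; 3];
  [:: 3; 4; 0; 1; 2]].

Definition XPl : seq (seq nat) :=
  [:: [:: 0; 1; 2; 3; 4];
  [:: 0; 2; 1; 3; 4];
  [:: 0; 3; 1; 2; 4];
  [:: 0; 4; 1; 2; 3];
  [:: 1; 0; 2; 3; 4];
  [:: 1; 2; 0; 3; 4];
  [:: 1; 3; 0; 2; 4];
  [:: 1; 4; 0; 2; 3];
  [:: 2; 0; 1; 3; 4];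
  [:: 2; 1; 0; 3; 4];
  [:: 2; 3; 0; 1; 4];
  [:: 2; 4; 0; 1; 3];
  [:: 3; 0; 1; 2; 4];
  [:: 3; 1; 0; 2; 4];
  [:: 3; 2; 0; 1; 4];
  [:: 3; 4; 0; 1; 2];
  [:: 4; 0; 1; 2; 3];
  [:: 4; 1; 0; 2; 3];
  [:: 4; 2; 0; 1; 3];
  [:: 4; 3; 0; 1; 2]].

Definition RCl : seq (seq nat) :=
  [:: [:: 0; 1; 2; 3; 4];
  [:: 1; 2; 3; 4; 0];
  [:: 2; 3; 4; 0; 1];
  [:: 3; 4; 0; 1; 2];
  [:: 4; 0; 1; 2; 3]].

Definition RDl : seq (seq nat) :=
  [:: [:: 0; 1; 2; 3; 4];
  [:: 1; 2; 3; 4; 0];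
  [:: 2; 3; 4; 0; 1];
  [:: 3; 4; 0; 1; 2];
  [:: 4; 0; 1; 2; 3];
  [:: 0; 2; 4; 1; 3];
  [:: 1; 3; 0; 2; 4];
  [:: 2; 4; 1; 3; 0];
  [:: 3; 0; 2; 4; 1];
  [:: 4; 1; 3; 0; 2];
  [:: 0; 3; 1; 4; 2];
  [:: 1; 4; 2; 0; 3];
  [:: 2; 0; 3; 1; 4];
  [:: 3; 1; 4; 2; 0];
  [:: 4; 2; 0; 3; 1];
  [:: 0; 4; 3; 2; 1];
  [:: 1; 0; 4; 3; 2];
  [:: 2; 1; 0; 4; 3];
  [:: 3; 2; 1; 0; 4];
  [:: 4; 3; 2; 1; 0]].

Definition RSl : seq (seq nat) :=
  [:: [:: 0; 1; 2; 3; 4];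
  [:: 0; 1; 2; 4; 3];
  [:: 0; 1; 3; 2; 4];
  [:: 0; 1; 3; 4; 2];
  [:: 0; 1; 4; 2; 3];
  [:: 0; 1; 4; 3; 2];
  [:: 1; 0; 2; 3; 4];
  [:: 1; 0; 2; 4; 3];
  [:: 1; 0; 3; 2; 4];
  [:: 1; 0; 3; 4; 2];
  [:: 1; 0; 4; 2; 3];
  [:: 1; 0; 4; 3; 2]].

Definition RPl : seq (seq nat) :=
  [:: [:: 0; 1; 2; 3; 4];
  [:: 0; 1; 2; 4; 3];
  [:: 0; 1; 3; 2; 4];
  [:: 0; 1; 3; 4; 2];
  [:: 0; 1; 4; 2; 3];
  [:: 0; 1; 4; 3; 2]].

Definition actC := act_mod RCl.
Definition actD := act_mod RDl.
Definition actS := act_mod RSl.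
Definition actP := act_mod RPl.

Lemma A5set_C : is_A5set XCl actC. Proof. by vm_compute. Qed.
Lemma A5set_D : is_A5set XDl actD. Proof. by vm_compute. Qed.
Lemma A5set_S : is_A5set XSl actS. Proof. by vm_compute. Qed.
Lemma A5set_P : is_A5set XPl actP. Proof. by vm_compute. Qed.

End A5Words.

Section Witnesses.

Definition is_order (p : nat) (L : seq nat) : bool := (L != id5) && (lpow L p == id5).

Definition cycle_word (L : seq nat) : seq nat := [seq ap (lpow L k) 0 | k <- id5].
Definition pentagram (w : seq nat) : seq nat := [seq nth 0 w (2 * k %% 5) | k <- id5].

(* A 5-cycle L fixes the cyclic order it traces and its pentagram reordering,
   one of which lies in the orbit XCl; a 3-cycle fixes the 2-subset of its
   fixed points. *)
Definition witnessC (L : seq nat) : seq nat :=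
  let w := canon_word RCl (cycle_word L) in
  if w \in XCl then w else canon_word RCl (pentagram (cycle_word L)).
Definition witnessD (L : seq nat) : seq nat := canon_word RDl (cycle_word L).
Definition witnessS (L : seq nat) : seq nat :=
  canon_word RSl ([seq k <- id5 | ap L k == k] ++ [seq k <- id5 | ap L k != k]).

Lemma witnessC_fixed : {in A5list, forall L, is_order 5 L ->
  witnessC L \in XCl /\ forall k, k < 5 -> actC (witnessC L) (lpow L k) = witnessC L}.
Proof.
have chk : all (fun L => is_order 5 L ==> (witnessC L \in XCl) &&
    all (fun k => actC (witnessC L) (lpow L k) == witnessC L) (iota 0 5)) A5list.
  by vm_compute.
move=> L /(allP chk)/implyP fixL /fixL/andP[inX /allP fixk].
by split=> [|k k5]; [exact: inX | apply/eqP/fixk; rewrite mem_iota].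
Qed.

Lemma witnessD_fixed : {in A5list, forall Lc, is_order 5 Lc ->
  witnessD Lc \in XDl /\ {in A5list, forall Lu,
    (exists2 k, k < 5 & lconj Lc Lu = lpow Lc k) -> actD (witnessD Lc) Lu = witnessD Lc}}.
Proof.
have chk : all (fun Lc => is_order 5 Lc ==> (witnessD Lc \in XDl) &&
    all (fun Lu => has (fun k => lconj Lc Lu == lpow Lc k) (iota 0 5) ==>
      (actD (witnessD Lc) Lu == witnessD Lc)) A5list) A5list.
  by vm_compute.
move=> Lc /(allP chk)/implyP fixLc /fixLc/andP[inX /allP fixu].
split=> [|Lu /fixu/implyP fix_u [k k5 eqk]]; first exact: inX.
by apply/eqP/fix_u/hasP; exists k; [rewrite mem_iota | apply/eqP].
Qed.

Lemma witnessS_fixed : {in A5list, forall Lc, is_order 3 Lc ->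
  witnessS Lc \in XSl /\ {in A5list, forall Lu,
    (exists2 k, k < 3 & lconj Lc Lu = lpow Lc k) -> actS (witnessS Lc) Lu = witnessS Lc}}.
Proof.
have chk : all (fun Lc => is_order 3 Lc ==> (witnessS Lc \in XSl) &&
    all (fun Lu => has (fun k => lconj Lc Lu == lpow Lc k) (iota 0 3) ==>
      (actS (witnessS Lc) Lu == witnessS Lc)) A5list) A5list.
  by vm_compute.
move=> Lc /(allP chk)/implyP fixLc /fixLc/andP[inX /allP fixu].
split=> [|Lu /fixu/implyP fix_u [k k3 eqk]]; first exact: inX.
by apply/eqP/fix_u/hasP; exists k; [rewrite mem_iota | apply/eqP].
Qed.

End Witnesses.

Section SplittingData.
Local Open Scope ring_scope.

Definition word_rep_f (act : seq nat -> seq nat -> seq nat) (xs : seq (seq nat))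
  (L : seq nat) (i j : nat) : int := (act (nth [::] xs i) L == nth [::] xs j)%:Z.

Definition Jrep_f (L : seq nat) (k l : nat) : int :=
  (ap L k.+1 == l.+1)%:Z - (ap L k.+1 == 0)%:Z.

(* The pairs (k+1, 0) sit at the positions 4(k+1) of XPl; on these positions
   inj_f k is the k-th unit vector, so ret_f retracts inj_f and the remaining
   positions Fbasis span a complement of its image. *)
Definition inj_f (k i : nat) : int :=
  (nth 0 (nth [::] XPl i) 0 == k.+1)%:Z - (nth 0 (nth [::] XPl i) 1 == k.+1)%:Z.
Definition ret_f (i k : nat) : int := (i == 4 * k.+1)%:Z.
Definition Fbasis : seq nat := [seq i <- iota 0 20 | i \notin [:: 4; 8; 12; 16]].
Definition sec_f (c i : nat) : int := (nth 0 Fbasis c == i)%:Z.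
Definition proj_f (i c : nat) : int :=
  idf i (nth 0 Fbasis c) - prodf 4 ret_f inj_f i (nth 0 Fbasis c).

Definition Frep_f (L : seq nat) (c d : nat) : int :=
  proj_f (index (actP (nth [::] XPl (nth 0 Fbasis c)) L) XPl) d.

Lemma inj_ret_check : mulcheck 4 20 4 inj_f ret_f idf. Proof. by vm_compute. Qed.
Lemma inj_proj_check : mulcheck 4 20 16 inj_f proj_f zerof. Proof. by vm_compute. Qed.
Lemma sec_proj_check : mulcheck 16 20 16 sec_f proj_f idf. Proof. by vm_compute. Qed.
Lemma ret_inj_proj_sec_check :
  eqcheck 20 20 (plusf (prodf 4 ret_f inj_f) (prodf 16 proj_f sec_f)) idf.
Proof. by vm_compute. Qed.

Lemma inj_equivariant_check : all (fun L =>
  mulcheck 4 4 20 (Jrep_f L) inj_f (prodf 20 inj_f (word_rep_f actP XPl L))) A5list.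
Proof. by vm_compute. Qed.

Lemma Frep_check : all (fun L =>
  let secrep_f c j := word_rep_f actP XPl L (nth 0 Fbasis c) j in
  mulcheck 16 20 20 sec_f (word_rep_f actP XPl L) secrep_f &&
  mulcheck 16 20 16 secrep_f proj_f (Frep_f L)) A5list.
Proof. by vm_compute. Qed.

End SplittingData.

Section Isomorphism.
Local Open Scope int_scope.

Definition theta_tab : seq (seq int) :=
  [:: [:: -1; 1; 1; 1; 1; 1; -3; -4; -4; -3; -2; -2; -2; -1; -1; -1; -2; -2; -1; -2; -3; -2];
  [:: 1; 1; 1; -1; 1; 1; -3; -3; -4; -4; -2; -2; -2; -2; -3; -2; -1; -1; -1; -2; -1; -2];
  [:: 1; 1; 1; 1; -1; 1; -3; -4; -3; -4; -2; -2; -2; -2; -1; -2; -2; -2; -3; -1; -1; -1];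
  [:: 1; 1; -1; 1; 1; 1; -4; -3; -3; -4; -1; -1; -1; -2; -2; -2; -3; -2; -2; -2; -2; -1];
  [:: 1; -1; 1; 1; 1; 1; -4; -3; -4; -3; -2; -2; -1; -2; -2; -2; -1; -1; -1; -2; -2; -3];
  [:: 1; 1; 1; -1; 1; 1; -3; -3; -4; -4; -2; -2; -3; -2; -2; -2; -1; -2; -2; -1; -1; -1];
  [:: 1; 1; 1; 1; 1; -1; -4; -4; -3; -3; -1; -1; -1; -2; -2; -1; -2; -2; -2; -3; -2; -2];
  [:: 1; 1; 1; 1; -1; 1; -3; -4; -3; -4; -3; -2; -2; -1; -1; -1; -2; -2; -2; -1; -2; -2];
  [:: 1; 1; -1; 1; 1; 1; -4; -3; -3; -4; -1; -2; -2; -2; -2; -3; -2; -2; -2; -1; -1; -1];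
  [:: 1; -1; 1; 1; 1; 1; -4; -3; -4; -3; -1; -1; -1; -3; -2; -2; -2; -1; -2; -2; -2; -2];
  [:: 1; 1; 1; 1; 1; -1; -4; -4; -3; -3; -2; -1; -2; -1; -1; -1; -2; -3; -2; -2; -2; -2];
  [:: -1; 1; 1; 1; 1; 1; -3; -4; -4; -3; -2; -3; -2; -1; -2; -2; -1; -1; -1; -2; -2; -2];
  [:: 0; 1; 1; 0; 0; 1; -2; -3; -3; -3; -2; -2; -2; -1; -1; -1; -1; -1; -1; -1; -1; -1];
  [:: 1; 0; 0; 0; 1; 1; -3; -2; -3; -3; -1; -1; -1; -2; -2; -2; -1; -1; -1; -1; -1; -1];
  [:: 1; 1; 0; 1; 0; 0; -3; -3; -2; -3; -1; -1; -1; -1; -1; -1; -2; -2; -2; -1; -1; -1];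
  [:: 0; 0; 1; 1; 1; 0; -3; -3; -3; -2; -1; -1; -1; -1; -1; -1; -1; -1; -1; -2; -2; -2];
  [:: 0; 1; 0; 1; 1; 0; -3; -3; -2; -2; -1; -1; -1; -1; -1; -1; -2; -2; -1; -2; -2; -1];
  [:: 1; 0; 1; 0; 1; 0; -3; -2; -3; -2; -1; -1; -1; -2; -2; -1; -1; -1; -1; -2; -1; -2];
  [:: 1; 0; 0; 1; 0; 1; -3; -2; -2; -3; -1; -1; -1; -2; -1; -2; -2; -1; -2; -1; -1; -1];
  [:: 0; 0; 1; 1; 0; 1; -2; -3; -3; -2; -2; -2; -1; -1; -1; -1; -1; -1; -1; -1; -2; -2];
  [:: 1; 1; 1; 0; 0; 0; -2; -3; -2; -3; -2; -1; -2; -1; -1; -1; -1; -2; -2; -1; -1; -1];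
  [:: 0; 1; 0; 0; 1; 1; -2; -2; -3; -3; -1; -2; -2; -1; -2; -2; -1; -1; -1; -1; -1; -1]].

Definition theta_inv_tab : seq (seq int) :=
  [:: [:: -3; -2; -2; -2; -2; -2; -2; -2; -2; -2; -2; -3; 4; 3; 3; 4; 4; 3; 3; 4; 3; 4];
  [:: -2; -2; -2; -2; -3; -2; -2; -2; -2; -3; -2; -2; 3; 4; 3; 4; 3; 4; 4; 4; 3; 3];
  [:: -2; -2; -2; -3; -2; -2; -2; -2; -3; -2; -2; -2; 3; 4; 4; 3; 4; 3; 4; 3; 3; 4];
  [:: -2; -3; -2; -2; -2; -3; -2; -2; -2; -2; -2; -2; 4; 4; 3; 3; 3; 4; 3; 3; 4; 4];
  [:: -2; -2; -3; -2; -2; -2; -2; -3; -2; -2; -2; -2; 4; 3; 4; 3; 3; 3; 4; 4; 4; 3];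
  [:: -2; -2; -2; -2; -2; -2; -3; -2; -2; -2; -3; -2; 3; 3; 4; 4; 4; 4; 3; 3; 4; 3];
  [:: 0; 0; 0; 0; 0; -1; 0; -1; 0; 0; 0; -1; 1; 0; 0; 0; 0; 0; 0; 1; 1; 1];
  [:: 0; -1; 0; 0; 0; 0; 0; 0; -1; -1; 0; 0; 0; 1; 0; 0; 0; 1; 1; 0; 0; 1];
  [:: 0; 0; -1; -1; 0; 0; 0; 0; 0; 0; -1; 0; 0; 0; 1; 0; 1; 0; 1; 0; 1; 0];
  [:: -1; 0; 0; 0; -1; 0; -1; 0; 0; 0; 0; 0; 0; 0; 0; 1; 1; 1; 0; 1; 0; 0];
  [:: 0; 0; 0; -1; 0; 0; 0; 0; 0; 0; -1; -1; 0; 0; 1; 1; 1; 0; 0; 0; 0; 1];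
  [:: 0; 0; 0; 0; -1; -1; -1; 0; 0; 0; 0; 0; 0; 1; 0; 1; 0; 1; 0; 0; 1; 0];
  [:: 0; 0; 0; 0; 0; 0; 0; -1; -1; -1; 0; 0; 0; 1; 1; 0; 0; 0; 1; 1; 0; 0];
  [:: -1; 0; 0; 0; 0; 0; -1; 0; -1; 0; 0; 0; 0; 0; 1; 1; 1; 0; 0; 0; 0; 1];
  [:: 0; 0; 0; 0; 0; 0; 0; -1; 0; -1; 0; -1; 1; 0; 0; 1; 0; 0; 1; 1; 0; 0];
  [:: 0; -1; -1; 0; 0; 0; 0; 0; 0; 0; -1; 0; 1; 0; 1; 0; 0; 1; 0; 0; 1; 0];
  [:: 0; -1; 0; 0; 0; 0; 0; 0; 0; -1; -1; 0; 0; 1; 0; 1; 0; 1; 0; 0; 1; 0];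
  [:: -1; 0; -1; 0; -1; 0; 0; 0; 0; 0; 0; 0; 1; 0; 0; 1; 0; 0; 1; 1; 0; 0];
  [:: 0; 0; 0; -1; 0; -1; 0; 0; 0; 0; 0; -1; 1; 1; 0; 0; 1; 0; 0; 0; 0; 1];
  [:: 0; 0; -1; -1; -1; 0; 0; 0; 0; 0; 0; 0; 0; 1; 1; 0; 0; 0; 1; 1; 0; 0];
  [:: 0; 0; 0; 0; 0; -1; -1; -1; 0; 0; 0; 0; 1; 0; 1; 0; 0; 1; 0; 0; 1; 0];
  [:: -1; -1; 0; 0; 0; 0; 0; 0; -1; 0; 0; 0; 1; 1; 0; 0; 1; 0; 0; 0; 0; 1]].

Definition theta_f := nth 0 \o nth [::] theta_tab.
Definition theta_inv_f := nth 0 \o nth [::] theta_inv_tab.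

Definition src_f (L : seq nat) := blockf 12 12 (word_rep_f actC XCl L) (word_rep_f actS XSl L).
Definition dst_f (L : seq nat) := blockf 6 6 (word_rep_f actD XDl L) (Frep_f L).

Lemma theta_equivariant_check : all (fun L =>
  mulcheck 22 22 22 (src_f L) theta_f (prodf 22 theta_f (dst_f L))) A5list.
Proof. by vm_compute. Qed.

Lemma theta_inv_r_check : mulcheck 22 22 22 theta_f theta_inv_f idf. Proof. by vm_compute. Qed.
Lemma theta_inv_l_check : mulcheck 22 22 22 theta_inv_f theta_f idf. Proof. by vm_compute. Qed.

End Isomorphism.

Section A5Model.
Variables (gT : finGroupType) (G H : {group gT}).
Hypotheses (sHG : H \subset G) (cardG : #|G| = 60) (cardH : #|H| = 12).
Hypothesis simG : simple G.
Local Notation cs := (coset_seq G H).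

Section CosetPermutation.
Local Open Scope group_scope.

Definition coset_perm (g : gT) : seq nat :=
  [seq index (nth set0 cs k :* g) cs | k <- id5].

Lemma size_coset_seq : size cs = 5.
Proof.
rewrite /coset_seq -cardE -/(indexg G H); apply/eqP.
by rewrite -(eqn_pmul2l (_ : 0 < 12)) // -{1}cardH Lagrange // cardG.
Qed.

Lemma uniq_coset_seq : uniq cs. Proof. exact: enum_uniq. Qed.

Lemma coset_seq_nth C : C \in rcosets H G -> exists2 k, k < 5 & nth set0 cs k = C.
Proof.
rewrite -mem_enum => Ccs; exists (index C cs); last exact: nth_index.
by rewrite -size_coset_seq index_mem.
Qed.

Lemma nth_coset_seq k : k < 5 -> nth set0 cs k \in rcosets H G.
Proof. by move=> k5; rewrite -mem_enum mem_nth ?size_coset_seq. Qed.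

Lemma nth_coset_seq_eq i j : i < 5 -> j < 5 ->
  (nth set0 cs i == nth set0 cs j) = (i == j).
Proof. by move=> i5 j5; rewrite nth_uniq ?size_coset_seq ?uniq_coset_seq. Qed.

Lemma nth_coset_perm k g : k < 5 -> g \in G ->
  ap (coset_perm g) k < 5 /\ nth set0 cs (ap (coset_perm g) k) = nth set0 cs k :* g.
Proof.
move=> k5 Gg; have /rcosetsP[x Gx csk] := nth_coset_seq k5.
have Cg : nth set0 cs k :* g \in cs.
  by rewrite mem_enum csk -rcosetM; apply/rcosetsP; exists (x * g); rewrite ?groupM.
rewrite /ap (nth_map 0) ?size_iota // nth_iota // add0n.
by rewrite -size_coset_seq index_mem nth_index.
Qed.

Lemma pmat_coset_perm g i j : g \in G -> i < 5 -> j < 5 ->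
  pmat_nat G H g i j = ((ap (coset_perm g) i == j)%:Z)%R.
Proof.
move=> Gg i5 j5; have [lt5 csi] := nth_coset_perm i5 Gg.
by rewrite /pmat_nat -csi nth_coset_seq_eq.
Qed.

Lemma pmat_natV g i j : pmat_nat G H g^-1 i j = pmat_nat G H g j i.
Proof.
rewrite /pmat_nat; congr (Posz (nat_of_bool _)).
by apply/eqP/eqP=> <-; rewrite ?rcosetKV ?rcosetK.
Qed.

Lemma coset_perm1 : coset_perm 1 = id5.
Proof.
apply: (@eq_from_nth _ 0) => [|k]; rewrite size_map // => k5.
have [lt5 cs1] := nth_coset_perm k5 (group1 G).
rewrite -/(ap (coset_perm 1) k) nth_iota // add0n.
by apply/eqP; rewrite -nth_coset_seq_eq // cs1 rcoset1.
Qed.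

Lemma coset_permM :
  {in G &, forall g h, coset_perm (g * h) = lcomp (coset_perm g) (coset_perm h)}.
Proof.
move=> g h Gg Gh; apply: (@eq_from_nth _ 0) => [|k]; rewrite size_map // => k5.
have [ltg csg] := nth_coset_perm k5 Gg.
have [ltgh csgh] := nth_coset_perm k5 (groupM Gg Gh).
have [lth csh] := nth_coset_perm ltg Gh.
rewrite -/(ap (coset_perm (g * h)) k) [RHS](nth_map 0) ?size_iota // nth_iota //.
by apply/eqP; rewrite add0n -nth_coset_seq_eq // csgh csh csg rcosetM.
Qed.

Lemma coset_perm_S5 g : g \in G -> coset_perm g \in S5list.
Proof.
move=> Gg; rewrite mem_permutations.
have cp_uniq : uniq (coset_perm g).
  rewrite map_inj_in_uniq ?iota_uniq // => i j.
  rewrite !mem_iota add0n => /andP[_ i5] /andP[_ j5] eq_ij.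
  have [_ csi] := nth_coset_perm i5 Gg; have [_ csj] := nth_coset_perm j5 Gg.
  apply/eqP; rewrite -nth_coset_seq_eq //.
  rewrite -(rcosetK g (nth _ _ i)) -(rcosetK g (nth _ _ j)) -csi -csj.
  by rewrite /ap !(nth_map 0) ?size_iota ?nth_iota // eq_ij.
have cp_sub : {subset coset_perm g <= id5}.
  move=> x /mapP[k]; rewrite mem_iota add0n => /andP[_ k5] ->.
  have [+ _] := nth_coset_perm k5 Gg.
  by rewrite /ap (nth_map 0) ?size_iota ?nth_iota // add0n mem_iota.
apply: uniq_perm => //.
by have [] := uniq_min_size cp_uniq cp_sub; rewrite size_map.
Qed.

Lemma coset_perm_inj : {in G &, injective coset_perm}.
Proof.
move=> g h Gg Gh eq_gh.
have core1 : gcore H G = 1.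
  have [_ simp] := simpleP _ simG; case: (simp _ (gcore_normal sHG)) => // coreG.
  by have := subset_leq_card (gcore_sub H G); rewrite coreG cardG cardH.
suff : g * h^-1 \in gcore H G by rewrite core1 inE -eq_mulgV1 => /eqP.
rewrite -astabRs_rcosets.
apply/astabP=> C /coset_seq_nth[k k5 <-] /=.
have [_ csg] := nth_coset_perm k5 Gg; have [_ csh] := nth_coset_perm k5 Gh.
by rewrite rcosetE rcosetM -csg eq_gh csh rcosetK.
Qed.

Lemma coset_perm_even g : g \in G -> ~~ lodd (coset_perm g).
Proof.
have oddM x y : x \in G -> y \in G ->
    lodd (coset_perm (x * y)) = lodd (coset_perm x) (+) lodd (coset_perm y).
  by move=> Gx Gy; rewrite coset_permM // lodd_lcomp ?coset_perm_S5.
pose N := [set x in G | ~~ lodd (coset_perm x)].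
have N_group : group_set N.
  apply/group_setP; split=> [|x y]; first by rewrite inE group1 coset_perm1.
  rewrite !inE => /andP[Gx ox] /andP[Gy oy].
  by rewrite groupM // oddM // (negbTE ox) (negbTE oy).
have nNG : Group N_group <| G.
  apply/andP; split; first by apply/subsetP=> x; rewrite inE => /andP[].
  apply/normsP=> x Gx; apply/setP=> y; rewrite mem_conjg !inE groupJr ?groupV //.
  case Gy: (y \in G) => //=; rewrite conjgE invgK !oddM ?groupM ?groupV //.
  have := oddM _ _ (groupVr Gx) Gx; rewrite mulVg coset_perm1 lodd_id5.
  by case: (lodd _); case: (lodd _); case: (lodd _).
have [c Gc oc] : {c | c \in G & #[c] = 3} by apply: Cauchy; rewrite ?cardG.
(* c = (c^2)^2 is even, so N is a nontrivial normal subgroup. *)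
have Nc : c \in N.
  have -> : c = c ^+ 2 * c ^+ 2 by rewrite -expgD (expgS c 3) -oc expg_order mulg1.
  by rewrite inE groupM ?groupX // oddM ?groupX // addbb.
have [_ simp] := simpleP _ simG; case: (simp _ nNG) => [N1 | NG].
  by have : c \in Group N_group := Nc; rewrite N1 inE => /eqP c1; rewrite c1 order1 in oc.
by rewrite -NG inE => /andP[].
Qed.

Lemma coset_perm_A5 g : g \in G -> coset_perm g \in A5list.
Proof. by move=> Gg; rewrite mem_filter coset_perm_even ?coset_perm_S5. Qed.

Lemma coset_perm_surj L : L \in A5list -> exists2 g, g \in G & coset_perm g = L.
Proof.
have im_uniq : uniq [seq coset_perm g | g <- enum G].
  by rewrite map_inj_in_uniq ?enum_uniq // => x y; rewrite !mem_enum; apply: coset_perm_inj.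
have im_sub : {subset [seq coset_perm g | g <- enum G] <= A5list}.
  by move=> M /mapP[x]; rewrite mem_enum => Gx ->; apply: coset_perm_A5.
have [|_ im_eq] := uniq_min_size im_uniq im_sub.
  by rewrite size_map -cardE cardG size_A5list.
by rewrite -im_eq => /mapP[g]; rewrite mem_enum => Gg ->; exists g.
Qed.

Lemma coset_permV g : g \in G -> coset_perm g^-1 = linv (coset_perm g).
Proof.
move=> Gg; apply: linv_unique; rewrite ?coset_perm_A5 ?groupV //.
by rewrite -coset_permM ?groupV // mulgV coset_perm1.
Qed.

Lemma coset_permX g e : g \in G -> coset_perm (g ^+ e) = lpow (coset_perm g) e.
Proof.
move=> Gg; elim: e => [|e IHe]; first exact: coset_perm1.
by rewrite expgSr coset_permM ?groupX // IHe.
Qed.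

Lemma coset_permJ c u : c \in G -> u \in G ->
  coset_perm (c ^ u) = lconj (coset_perm c) (coset_perm u).
Proof.
by move=> Gc Gu; rewrite conjgE mulgA /lconj !coset_permM ?groupM ?groupV // coset_permV.
Qed.

End CosetPermutation.

Section WordAction.
Variables (xs : seq (seq nat)) (act : seq nat -> seq nat -> seq nat).
Hypothesis xsP : is_A5set xs act.
Local Notation cp := coset_perm.
Local Notation x_ i := (nth [::] xs i).

Let xs_uniq : uniq xs. Proof. by case/and5P: xsP. Qed.

Let nth_xs_inj (i j : 'I_(size xs)) : x_ i = x_ j -> i = j.
Proof. by move/eqP; rewrite nth_uniq // => /eqP/val_inj. Qed.

Let act_in x g : x \in xs -> g \in G -> act x (cp g) \in xs.
Proof.
case/and5P: xsP => _ /allP closed _ _ _ xs_x Gg.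
by have /allP := closed x xs_x; apply; apply: coset_perm_A5.
Qed.

Let act1 x : x \in xs -> act x (cp 1) = x.
Proof. by case/and5P: xsP => _ _ /allP fix1 _ _ /fix1/eqP; rewrite coset_perm1. Qed.

Let actM x g h : x \in xs -> g \in G -> h \in G ->
  act (act x (cp g)) (cp h) = act x (cp (g * h)%g).
Proof.
case/and5P: xsP => _ _ _ /allP comp _ xs_x Gg Gh.
have /allP/(_ _ (coset_perm_A5 Gg))/allP := comp x xs_x.
by move/(_ _ (coset_perm_A5 Gh))/eqP ->; rewrite coset_permM.
Qed.

(* Outside G the action is trivial, since [is_action] asks for injectivity. *)
Definition word_act (i : 'I_(size xs)) (g : gT) : 'I_(size xs) :=
  if g \in G then insubd i (index (act (x_ i) (cp g)) xs) else i.

Lemma nth_word_act i g : g \in G -> x_ (word_act i g) = act (x_ i) (cp g).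
Proof.
move=> Gg; have xs_g := act_in (mem_nth [::] (ltn_ord i)) Gg.
by rewrite /word_act Gg val_insubd index_mem xs_g nth_index.
Qed.

Lemma word_act_eq i j g : g \in G -> (word_act i g == j) = (act (x_ i) (cp g) == x_ j).
Proof. by move=> Gg; rewrite -nth_word_act // nth_uniq. Qed.

Lemma word_act_is_action : is_action G word_act.
Proof.
split=> [g i j /= eq_ij | i g h Gg Gh].
  case Gg: (g \in G); last by move: eq_ij; rewrite /word_act Gg.
  apply: nth_xs_inj.
  rewrite -[x_ i]act1 ?mem_nth // -[x_ j]act1 ?mem_nth // -(mulgV g).
  by rewrite -!actM ?mem_nth ?groupV // -!nth_word_act ?groupV // eq_ij.
by apply: nth_xs_inj; rewrite !nth_word_act ?groupM // actM ?mem_nth.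
Qed.

Definition word_action := Action word_act_is_action.

Lemma word_action_orbit i : orbit word_action G i = setT.
Proof.
apply/setP=> j; rewrite inE; apply/orbitP.
case/and5P: xsP => _ _ _ _ /allP trans.
have /allP/(_ _ (mem_nth [::] (ltn_ord j)))/hasP[L A5L /eqP actL] :=
  trans _ (mem_nth [::] (ltn_ord i)).
have [g Gg cpg] := coset_perm_surj A5L.
by exists g => //; apply/eqP; rewrite word_act_eq // cpg actL.
Qed.

Lemma Zperm_iso_word_lattice (K : {group gT}) x0 :
  K \subset G -> x0 \in xs -> {in K, forall u, act x0 (cp u) = x0} ->
  (#|K| * size xs)%N = #|G| -> lat_iso G (Zperm G K) (permlat word_action).
Proof.
move=> sKG xs_x0 fixK cardK; have i0_lt : index x0 xs < size xs by rewrite index_mem.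
pose i0 := Ordinal i0_lt; apply: (Zperm_iso_permlat (word_action_orbit i0)).
apply: astab1_card_eq (word_action_orbit i0) _ cardK.
apply/subsetP=> u Ku; have Gu := subsetP sKG u Ku.
rewrite !inE Gu sub1set inE /= word_act_eq // nth_index // fixK //.
Qed.

End WordAction.

Section Lattices.
Local Open Scope ring_scope.

Let toC := word_action A5set_C.
Let toD := word_action A5set_D.
Let toS := word_action A5set_S.
Let toP := word_action A5set_P.

Lemma word_lattice_repE xs act (xsP : is_A5set xs act) g : g \in G ->
  rep (permlat (word_action xsP)) g
    = \matrix_(i < size xs, j < size xs) word_rep_f act xs (coset_perm g) i j.
Proof. by move=> Gg; apply/matrixP=> i j; rewrite !mxE /= word_act_eq. Qed.

Lemma Jchev_repE g : g \in G -> rep (Jchev G H) g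
  = \matrix_(k < (size cs).-1, l < (size cs).-1) Jrep_f (coset_perm g) k l.
Proof.
move=> Gg; apply/matrixP=> k l; rewrite !mxE !pmat_natV.
have ltS (i : 'I_(size cs).-1) : (i.+1 < 5)%N by rewrite -size_coset_seq -ltn_predRL.
by rewrite !pmat_coset_perm ?ltS.
Qed.

Definition inj_mx : 'M[int]_(rk (Jchev G H), size XPl) := \matrix_(k, i) inj_f k i.
Definition ret_mx : 'M[int]_(size XPl, rk (Jchev G H)) := \matrix_(i, k) ret_f i k.
Definition proj_mx : 'M[int]_(size XPl, 16) := \matrix_(i, c) proj_f i c.
Definition sec_mx : 'M[int]_(16, size XPl) := \matrix_(c, i) sec_f c i.

Definition P_lattice : lattice gT := permlat toP.
Definition F_lattice : lattice gT := coker_lattice P_lattice proj_mx sec_mx.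

Lemma inj_mx_equivariant : equivariant G (Jchev G H) P_lattice inj_mx.
Proof.
move=> g Gg; rewrite Jchev_repE // /P_lattice word_lattice_repE // /inj_mx.
have chk : mulcheck (size cs).-1 (size cs).-1 (size XPl) (Jrep_f (coset_perm g)) inj_f
    (prodf (size XPl) inj_f (word_rep_f actP XPl (coset_perm g))).
  by rewrite size_coset_seq; apply: (allP inj_equivariant_check); apply: coset_perm_A5.
by rewrite (mulcheckP chk) mulmx_fun.
Qed.

Lemma mulmx_inj_ret : inj_mx *m ret_mx = 1%:M.
Proof.
have chk : mulcheck (size cs).-1 (size XPl) (size cs).-1 inj_f ret_f idf.
  by rewrite size_coset_seq; exact: inj_ret_check.
by rewrite (mulcheckP chk) idf_mx.
Qed.

Lemma mulmx_inj_proj : inj_mx *m proj_mx = 0.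
Proof.
have chk : mulcheck (size cs).-1 (size XPl) 16 inj_f proj_f zerof.
  by rewrite size_coset_seq; exact: inj_proj_check.
by rewrite (mulcheckP chk) zerof_mx.
Qed.

Lemma mulmx_sec_proj : sec_mx *m proj_mx = 1%:M.
Proof. by rewrite /sec_mx /proj_mx (mulcheckP sec_proj_check) idf_mx. Qed.

Lemma ret_inj_add_proj_sec : ret_mx *m inj_mx + proj_mx *m sec_mx = 1%:M.
Proof.
have chk : eqcheck (size XPl) (size XPl)
    (plusf (prodf (size cs).-1 ret_f inj_f) (prodf 16 proj_f sec_f)) idf.
  by rewrite size_coset_seq; exact: ret_inj_proj_sec_check.
by rewrite !mulmx_fun addmx_fun (eqcheckP chk) idf_mx.
Qed.

Lemma F_lattice_repE g : g \in G ->
  rep F_lattice g = \matrix_(c < 16, d < 16) Frep_f (coset_perm g) c d.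
Proof.
move=> Gg; have /allP/(_ _ (coset_perm_A5 Gg))/andP[sec_rep rep_proj] := Frep_check.
change (sec_mx *m rep P_lattice g *m proj_mx
  = \matrix_(c < 16, d < 16) Frep_f (coset_perm g) c d).
rewrite /P_lattice word_lattice_repE // /sec_mx (mulcheckP sec_rep).
by rewrite /proj_mx (mulcheckP rep_proj).
Qed.

Definition theta : 'M[int]_(size XCl + size XSl, size XDl + 16) := \matrix_(i, j) theta_f i j.
Definition theta_inv : 'M[int]_(size XDl + 16, size XCl + size XSl) :=
  \matrix_(i, j) theta_inv_f i j.

Lemma theta_iso : lat_iso G (dsum (permlat toC) (permlat toS)) (dsum (permlat toD) F_lattice).
Proof.
exists theta, theta_inv; split.
- by rewrite (mulcheckP theta_inv_r_check) idf_mx.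
- by rewrite (mulcheckP theta_inv_l_check) idf_mx.
move=> g Gg; change (block_mx (rep (permlat toC) g) 0 0 (rep (permlat toS) g) *m theta
  = theta *m block_mx (rep (permlat toD) g) 0 0 (rep F_lattice g)).
rewrite F_lattice_repE // !word_lattice_repE // !blockf_mx.
have /allP/(_ _ (coset_perm_A5 Gg)) := theta_equivariant_check.
by rewrite /theta => /mulcheckP ->; rewrite mulmx_fun.
Qed.

Lemma F_lattice_flabby : flabby G F_lattice.
Proof.
apply: flabby_dsumr (flabby_iso theta_iso _).
by apply: flabby_dsum; apply: permlat_flabby.
Qed.

Lemma P_lattice_permutation : is_permutation G P_lattice.
Proof.
pose i0 : 'I_(size XPl) := ord0.
apply: (@is_permutation_iso _ _ 'C_G[i0 | toP]%G); first exact: subsetIl.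
exact: Zperm_iso_permlat (word_action_orbit _ i0) _.
Qed.

Lemma Jchev_flabby_resolution : flabby_resolution G (Jchev G H) P_lattice F_lattice inj_mx proj_mx.
Proof.
split.
- exact: permlat_Glattice.
- exact: coker_Glattice (permlat_Glattice _) inj_mx_equivariant mulmx_inj_proj
    mulmx_sec_proj ret_inj_add_proj_sec.
- exact: coker_short_exact inj_mx_equivariant mulmx_inj_ret mulmx_inj_proj
    mulmx_sec_proj ret_inj_add_proj_sec.
- exact: P_lattice_permutation.
- exact: F_lattice_flabby.
Qed.

Lemma is_order_coset_perm c p : c \in G -> #[c]%g = p -> (1 < p)%N -> is_order p (coset_perm c).
Proof.
move=> Gc oc p_gt1; apply/andP; split.
  apply: contraTneq p_gt1 => cp1; rewrite -oc.
  have -> : c = 1%g by apply: coset_perm_inj; rewrite ?group1 // coset_perm1.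
  by rewrite order1.
by rewrite -coset_permX // -oc expg_order coset_perm1.
Qed.

Lemma Zperm_C5_iso (C5 : {group gT}) :
  C5 \subset G -> cyclic C5 -> #|C5| = 5%N -> lat_iso G (Zperm G C5) (permlat toC).
Proof.
move=> sCG /cyclicP[c defC] cardC; have Cc : c \in C5 by rewrite defC cycle_id.
have Gc := subsetP sCG c Cc; have oc : #[c]%g = 5%N by rewrite /order -defC.
have [xs_x0 fix_pow] := witnessC_fixed (coset_perm_A5 Gc) (is_order_coset_perm Gc oc isT).
apply: (Zperm_iso_word_lattice A5set_C sCG xs_x0); last by rewrite cardC cardG.
move=> u; rewrite defC => /cyclePmin[k]; rewrite oc => k5 ->.
by rewrite coset_permX // fix_pow.
Qed.

Lemma Zperm_D5_iso (D5 : {group gT}) :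
  D5 \subset G -> D5 \isog 'D_10 -> lat_iso G (Zperm G D5) (permlat toD).
Proof.
move=> sDG isoD; have cardD : #|D5| = 10%N.
  by rewrite (card_isog isoD); exact: (card_dihedral (q := 5)).
have [c Dc oc] : {c | c \in D5 & #[c]%g = 5%N} by apply: Cauchy; rewrite ?cardD.
have Gc := subsetP sDG c Dc.
have [xs_x0 fix_norm] := witnessD_fixed (coset_perm_A5 Gc) (is_order_coset_perm Gc oc isT).
apply: (Zperm_iso_word_lattice A5set_D sDG xs_x0); last by rewrite cardD cardG.
move=> u Du; have Gu := subsetP sDG u Du.
have [|k kc cu] := conj_cycle_exp Dc _ Du; first by rewrite oc cardD.
apply: fix_norm; first exact: coset_perm_A5.
by exists k; rewrite -?oc // -coset_permJ // cu coset_permX.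
Qed.

Lemma Zperm_S3_iso (S3 : {group gT}) :
  S3 \subset G -> S3 \isog 'Sym_('I_3) -> lat_iso G (Zperm G S3) (permlat toS).
Proof.
move=> sSG isoS; have cardS : #|S3| = 6%N by rewrite (card_isog isoS) card_Sym card_ord.
have [c Sc oc] : {c | c \in S3 & #[c]%g = 3%N} by apply: Cauchy; rewrite ?cardS.
have Gc := subsetP sSG c Sc.
have [xs_x0 fix_norm] := witnessS_fixed (coset_perm_A5 Gc) (is_order_coset_perm Gc oc isT).
apply: (Zperm_iso_word_lattice A5set_S sSG xs_x0); last by rewrite cardS cardG.
move=> u Su; have Gu := subsetP sSG u Su.
have [|k kc cu] := conj_cycle_exp Sc _ Su; first by rewrite oc cardS.
apply: fix_norm; first exact: coset_perm_A5.
by exists k; rewrite -?oc // -coset_permJ // cu coset_permX.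
Qed.

End Lattices.

End A5Model.

Theorem theorem1p3 (gT : finGroupType) (G H C5 S3 D5 : {group gT}) :
  G \isog 'Alt_('I_5) ->
  H \subset G -> H \isog 'Alt_('I_4) ->
  C5 \subset G -> cyclic C5 -> #|C5| = 5 ->
  S3 \subset G -> S3 \isog 'Sym_('I_3) ->
  D5 \subset G -> D5 \isog 'D_10 ->
  exists (P F : lattice gT)
         (i : 'M[int]_(rk (Jchev G H), rk P)) (p : 'M[int]_(rk P, rk F)),
    [/\ flabby_resolution G (Jchev G H) P F i p,
        rk F = 16,
        lat_iso G (dsum (Zperm G C5) (Zperm G S3)) (dsum (Zperm G D5) F)
      & stably_permutation G F].
Proof.
move=> isoG sHG isoH sCG cycC cardC sSG isoS sDG isoD.
have cardG : #|G| = 60.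
  by apply/eqP; rewrite -(eqn_pmul2l (_ : 0 < 2)) // (card_isog isoG) card_Alt ?card_ord.
have cardH : #|H| = 12.
  by apply/eqP; rewrite -(eqn_pmul2l (_ : 0 < 2)) // (card_isog isoH) card_Alt ?card_ord.
have simG : simple G by rewrite (isog_simple isoG) simple_Alt5 // card_ord.
pose F := F_lattice sHG cardG cardH simG.
have isoCS := lat_iso_dsum (Zperm_C5_iso sHG cardG cardH simG sCG cycC cardC)
                           (Zperm_S3_iso sHG cardG cardH simG sSG isoS).
have isoDF := lat_iso_dsum (lat_iso_sym (Zperm_D5_iso sHG cardG cardH simG sDG isoD))
                           (lat_iso_refl G F).
have isoF := lat_iso_trans (lat_iso_trans isoCS (theta_iso sHG cardG cardH simG)) isoDF.
exists (P_lattice sHG cardG cardH simG), F, (inj_mx G H), proj_mx.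
split=> //; first exact: Jchev_flabby_resolution.
exact: stably_permutation_cancel sCG sSG sDG isoF.
Qed.
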